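(* Let $K\ge 1$, $T\ge 1$ and let $\ell_1,\dots,\ell_T\in[0,1]^K$ be arbitrary loss vectors. Then the regret of AdaHedge satisfies \[ \mathcal{R}^{\mathrm{ah}}_T\le 2\sqrt{\frac{L_T^*(T-L_T^* )}{T}\ln K}+\tfrac{16}{3}\ln K+2. \]
   Context: Hedge setting: there are $K$ experts; in round $t$ the learner chooses a probability vector $w_t=(w_{t,1},\dots,w_{t,K})$, then the loss vector $\ell_t=(\ell_{t,1},\dots,\ell_{t,K})$ is revealed and the learner suffers the Hedge loss $h_t=\sum_k w_{t,k}\ell_{t,k}$. Write $L_{t,k}=\sum_{s=1}^t \ell_{s,k}$ (with $L_{0,k}=0$), $L^*_t=\min_k L_{t,k}$, $H_T=\sum_{t=1}^T h_t$, and regret $\mathcal{R}_T=H_T-L^*_T$. Exponential weights with learning rate $\eta\in(0,\infty]$ at time $t$: $w_{t,k}=e^{-\eta L_{t-1,k}}/\sum_j e^{-\eta L_{t-1,j}}$ if $\eta<\infty$; if $\eta=\infty$, $w_t$ is uniform on $\{k: L_{t-1,k}=L^*_{t-1}\}$. If round $t$ uses learning rate $\eta_t$, the mix loss is $m_t=-\frac{1}{\eta_t}\ln\big(\sum_k w_{t,k}e^{-\eta_t\ell_{t,k}}\big)$ if $\eta_t<\infty$ and $m_t=L^*_t-L^*_{t-1}$ if $\eta_t=\infty$; the mixability gap is $\delta_t=h_t-m_t$, with $\Delta_t=\sum_{s\le t}\delta_s$. AdaHedge: $\Delta_0=0$ and, for $t=1,2,\dots$, the learning rate is $\eta^{\mathrm{ah}}_t=\ln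 K/\Delta^{\mathrm{ah}}_{t-1}$ (interpreted as $+\infty$ when $\Delta^{\mathrm{ah}}_{t-1}=0$), the weights $w^{\mathrm{ah}}_t$ are the exponential weights with learning rate $\eta^{\mathrm{ah}}_t$ computed from $L_{t-1}$, and $\Delta^{\mathrm{ah}}_t=\Delta^{\mathrm{ah}}_{t-1}+\delta^{\mathrm{ah}}_t$. $\mathcal{R}^{\mathrm{ah}}_T$ denotes the regret of AdaHedge. *)

From Stdlib Require Import Reals Lra.
Open Scope R_scope.

(* Loss sequence: loss t k = ell_{t,k}, rounds t = 1..T, experts k = 0..K-1. *)

Fixpoint sumk (n : nat) (f : nat -> R) : R :=
  match n with O => 0 | S m => sumk m f + f m end.

Fixpoint sumt (t : nat) (f : nat -> R) : R :=
  match t with O => 0 | S s => sumt s f + f (S s) end.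

Fixpoint minupto (n : nat) (f : nat -> R) : R :=
  match n with O => f O | S m => Rmin (minupto m f) (f (S m)) end.

Definition Lcum (loss : nat -> nat -> R) (t k : nat) : R :=
  sumt t (fun s => loss s k).

Definition Lstar (K : nat) (loss : nat -> nat -> R) (t : nat) : R :=
  minupto (K - 1) (fun k => Lcum loss t k).

(* learning rate in (0, +oo]: [Some eta] is finite eta, [None] is +oo *)
Definition lrate := option R.

Definition ew_weight (K : nat) (loss : nat -> nat -> R) (eta : lrate)
    (t k : nat) : R :=
  match eta with
  | Some e =>
      exp (- e * Lcum loss (t - 1) k) /
      sumk K (fun j => exp (- e * Lcum loss (t - 1) j))
  | None =>
      let ind j := if Req_EM_T (Lcum loss (t - 1) j) (Lstar K loss (t - 1))
                   then 1 else 0 in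
      ind k / sumk K ind
  end.

Definition hedge_loss (K : nat) (loss : nat -> nat -> R) (eta : lrate)
    (t : nat) : R :=
  sumk K (fun k => ew_weight K loss eta t k * loss t k).

Definition mix_loss (K : nat) (loss : nat -> nat -> R) (eta : lrate)
    (t : nat) : R :=
  match eta with
  | Some e =>
      - (1 / e) * ln (sumk K (fun k => ew_weight K loss eta t k *
                                        exp (- e * loss t k)))
  | None => Lstar K loss t - Lstar K loss (t - 1)
  end.

Definition mix_gap (K : nat) (loss : nat -> nat -> R) (eta : lrate)
    (t : nat) : R :=
  hedge_loss K loss eta t - mix_loss K loss eta t.

Definition ah_rate (K : nat) (D : R) : lrate :=
  if Req_EM_T D 0 then None else Some (ln (INR K) / D).

Fixpoint ah_Delta (K : nat) (loss : nat -> nat -> R) (t : nat) : R :=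
  match t with
  | O => 0
  | S s => ah_Delta K loss s
           + mix_gap K loss (ah_rate K (ah_Delta K loss s)) (S s)
  end.

Definition ah_eta (K : nat) (loss : nat -> nat -> R) (t : nat) : lrate :=
  ah_rate K (ah_Delta K loss (t - 1)).

Definition ah_H (K : nat) (loss : nat -> nat -> R) (T : nat) : R :=
  sumt T (fun t => hedge_loss K loss (ah_eta K loss t) t).

Definition ah_regret (K : nat) (loss : nat -> nat -> R) (T : nat) : R :=
  ah_H K loss T - Lstar K loss T.

From Stdlib Require Import Reals Lra Lia Psatz.
From Coquelicot Require Import Coquelicot.
Open Scope R_scope.

(* The regret of AdaHedge is at most twice its cumulative mixability gap Delta_T: with
   eta_t = ln K / Delta_(t-1) the mix losses telescope against a potential that only grows
   as the learning rate decreases, so their sum is at most Lstar_T + Delta_(T-1).  A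
   Bernstein-type bound on a single round, (1 - eta/3) delta <= eta/2 h (1 - h), turns the
   recursion Delta_t = Delta_(t-1) + delta_t into
   Delta_T^2 <= ln K sum_t h_t (1 - h_t) + (2/3 ln K + 1) Delta_T.  The variance sum is at
   most H (T - H) / T <= Lstar (T - Lstar) / T + R, and solving the quadratic inequality for
   Delta_T bounds R <= 2 Delta_T. *)

Lemma exp_le x y : x <= y -> exp x <= exp y.
Proof. intros [H| ->]; [left; apply exp_increasing; exact H | lra]. Qed.

Lemma ln_le_sub1 y : 0 < y -> ln y <= y - 1.
Proof.
  intros Hy. pose proof (exp_ineq1_le (ln y)) as H. rewrite exp_ln in H by exact Hy. lra.
Qed.

Lemma min_at_0_of_deriv_sign (f f' : R -> R) :
  (forall y, derivable_pt_lim f y (f' y)) -> (forall y, 0 <= y * f' y) ->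
  forall x, f 0 <= f x.
Proof.
  intros Hd Hs x.
  destruct (Rtotal_order x 0) as [Hx|[-> | Hx]]; [| lra |].
  - destruct (MVT_cor2 f f' x 0 Hx (fun c _ => Hd c)) as [c [Hc Hcx]].
    specialize (Hs c). assert (f' c <= 0) by nra. nra.
  - destruct (MVT_cor2 f f' 0 x Hx (fun c _ => Hd c)) as [c [Hc Hcx]].
    specialize (Hs c). assert (0 <= f' c) by nra. nra.
Qed.

Lemma sign_at_0_of_deriv_nonneg (f f' : R -> R) :
  (forall y, derivable_pt_lim f y (f' y)) -> (forall y, 0 <= f' y) ->
  forall x, 0 <= x * (f x - f 0).
Proof.
  intros Hd Hs x.
  destruct (Rtotal_order x 0) as [Hx|[-> | Hx]]; [| lra |].
  - destruct (MVT_cor2 f f' x 0 Hx (fun c _ => Hd c)) as [c [Hc _]].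
    specialize (Hs c). nra.
  - destruct (MVT_cor2 f f' 0 x Hx (fun c _ => Hd c)) as [c [Hc _]].
    specialize (Hs c). nra.
Qed.

Lemma one_sub_mul_exp_le1 x : (1 - x) * exp x <= 1.
Proof.
  pose proof (exp_ineq1_le (- x)). pose proof (exp_pos x).
  assert (E : exp (- x) * exp x = 1) by (rewrite <- exp_plus, Rplus_opp_l; apply exp_0).
  nra.
Qed.

Lemma exp_sub2_add_sign x : 0 <= x * ((x - 2) * exp x + x + 2).
Proof.
  pose (f := fun x => (x - 2) * exp x + x + 2).
  assert (Hf0 : f 0 = 0) by (unfold f; rewrite exp_0; ring).
  enough (0 <= x * (f x - f 0)) by (rewrite Hf0 in *; unfold f in *; lra).
  apply (sign_at_0_of_deriv_nonneg f (fun y => (y - 1) * exp y + 1)).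
  - intro y. apply is_derive_Reals. unfold f. auto_derive; [exact I | ring].
  - intro y. pose proof (one_sub_mul_exp_le1 y). lra.
Qed.

Lemma exp_remainder_le x : (1 - x / 3) * (exp x - 1 - x) <= x ^ 2 / 2.
Proof.
  pose (g := fun x => x ^ 2 / 2 - (1 - x / 3) * (exp x - 1 - x)).
  assert (Hg0 : g 0 = 0) by (unfold g; rewrite exp_0; field).
  enough (g 0 <= g x) by (unfold g in *; lra).
  apply (min_at_0_of_deriv_sign g (fun y => ((y - 2) * exp y + y + 2) / 3)).
  - intro y. apply is_derive_Reals. unfold g. auto_derive; [exact I | field].
  - intro y. pose proof (exp_sub2_add_sign y). lra.
Qed.

Lemma sumk_ext n f g : (forall k, (k < n)%nat -> f k = g k) -> sumk n f = sumk n g.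
Proof.
  induction n as [|n IH]; intros H; simpl; [reflexivity|].
  rewrite IH by (intros; apply H; lia). rewrite H by lia. reflexivity.
Qed.

Lemma sumk_le n f g : (forall k, (k < n)%nat -> f k <= g k) -> sumk n f <= sumk n g.
Proof.
  induction n as [|n IH]; intros H; simpl; [lra|].
  assert (sumk n f <= sumk n g) by (apply IH; intros; apply H; lia).
  assert (f n <= g n) by (apply H; lia). lra.
Qed.

Lemma sumk_add n f g : sumk n (fun k => f k + g k) = sumk n f + sumk n g.
Proof. induction n as [|n IH]; simpl; [ring|]. rewrite IH. ring. Qed.

Lemma sumk_sub n f g : sumk n (fun k => f k - g k) = sumk n f - sumk n g.
Proof. induction n as [|n IH]; simpl; [ring|]. rewrite IH. ring. Qed.

Lemma sumk_mul_l n a f : sumk n (fun k => a * f k) = a * sumk n f.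
Proof. induction n as [|n IH]; simpl; [ring|]. rewrite IH. ring. Qed.

Lemma sumk_mul_r n a f : sumk n (fun k => f k * a) = sumk n f * a.
Proof. induction n as [|n IH]; simpl; [ring|]. rewrite IH. ring. Qed.

Lemma sumk_div n a f : sumk n (fun k => f k / a) = sumk n f / a.
Proof. apply sumk_mul_r. Qed.

Lemma sumk_const n a : sumk n (fun _ => a) = INR n * a.
Proof. induction n as [|n IH]; simpl sumk; [simpl; ring|]. rewrite IH, S_INR. ring. Qed.

Lemma sumk_nonneg n f : (forall k, (k < n)%nat -> 0 <= f k) -> 0 <= sumk n f.
Proof.
  intros H. pose proof (sumk_le n (fun _ => 0) f H) as Hle.
  rewrite sumk_const, Rmult_0_r in Hle. exact Hle.
Qed.

Lemma sumk_ge_term n f j :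
  (forall k, (k < n)%nat -> 0 <= f k) -> (j < n)%nat -> f j <= sumk n f.
Proof.
  induction n as [|n IH]; intros H Hj; simpl; [lia|].
  assert (0 <= f n) by (apply H; lia).
  destruct (Nat.eq_dec j n) as [->|Hjn].
  - assert (0 <= sumk n f) by (apply sumk_nonneg; intros; apply H; lia). lra.
  - assert (f j <= sumk n f) by (apply IH; [intros; apply H | ]; lia). lra.
Qed.

Lemma sumk_exp_pos n f : (1 <= n)%nat -> 0 < sumk n (fun k => exp (f k)).
Proof.
  intros Hn. apply Rlt_le_trans with (exp (f 0%nat)); [apply exp_pos|].
  apply (sumk_ge_term n (fun k => exp (f k))); [intros; left; apply exp_pos | lia].
Qed.

Lemma sumt_ext t f g : (forall s, (1 <= s <= t)%nat -> f s = g s) -> sumt t f = sumt t g.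
Proof.
  induction t as [|t IH]; intros H; simpl; [reflexivity|].
  rewrite IH by (intros; apply H; lia). rewrite H by lia. reflexivity.
Qed.

Lemma sumt_le t f g : (forall s, (1 <= s <= t)%nat -> f s <= g s) -> sumt t f <= sumt t g.
Proof.
  induction t as [|t IH]; intros H; simpl; [lra|].
  assert (sumt t f <= sumt t g) by (apply IH; intros; apply H; lia).
  assert (f (S t) <= g (S t)) by (apply H; lia). lra.
Qed.

Lemma sumt_add t f g : sumt t (fun s => f s + g s) = sumt t f + sumt t g.
Proof. induction t as [|t IH]; simpl; [ring|]. rewrite IH. ring. Qed.

Lemma sumt_sub t f g : sumt t (fun s => f s - g s) = sumt t f - sumt t g.
Proof. induction t as [|t IH]; simpl; [ring|]. rewrite IH. ring. Qed.

Lemma sumt_mul_l t a f : sumt t (fun s => a * f s) = a * sumt t f.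
Proof. induction t as [|t IH]; simpl; [ring|]. rewrite IH. ring. Qed.

Lemma sumt_const t a : sumt t (fun _ => a) = INR t * a.
Proof. induction t as [|t IH]; simpl sumt; [simpl; ring|]. rewrite IH, S_INR. ring. Qed.

Lemma sumk_pos_term n f : 0 < sumk n f -> exists j, (j < n)%nat /\ 0 < f j.
Proof.
  induction n as [|n IH]; simpl; intros H; [lra|].
  destruct (Rlt_dec 0 (f n)) as [Hn|Hn]; [exists n; split; [lia | exact Hn]|].
  destruct IH as [j [Hj Hfj]]; [lra|]. exists j; split; [lia | exact Hfj].
Qed.

Definition prob_weights (n : nat) (w : nat -> R) : Prop :=
  (forall k, (k < n)%nat -> 0 <= w k) /\ sumk n w = 1.

Lemma wsum_pos n w x : prob_weights n w -> (forall k, (k < n)%nat -> 0 < x k) ->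
  0 < sumk n (fun k => w k * x k).
Proof.
  intros [Hw Hs] Hx.
  destruct (sumk_pos_term n w) as [j [Hj Hwj]]; [lra|].
  apply Rlt_le_trans with (w j * x j); [apply Rmult_lt_0_compat; auto|].
  apply (sumk_ge_term n (fun k => w k * x k)); [|exact Hj].
  intros k Hk. apply Rmult_le_pos; [apply Hw | left; apply Hx]; exact Hk.
Qed.

Lemma wsum_unit n w l : prob_weights n w -> (forall k, (k < n)%nat -> 0 <= l k <= 1) ->
  0 <= sumk n (fun k => w k * l k) <= 1.
Proof.
  intros [Hw Hs] Hl. split.
  - apply sumk_nonneg. intros k Hk. specialize (Hw k Hk). specialize (Hl k Hk). nra.
  - rewrite <- Hs. apply sumk_le. intros k Hk. specialize (Hw k Hk). specialize (Hl k Hk). nra.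
Qed.

Lemma jensen_ln n w x : prob_weights n w -> (forall k, (k < n)%nat -> 0 < x k) ->
  sumk n (fun k => w k * ln (x k)) <= ln (sumk n (fun k => w k * x k)).
Proof.
  intros Hp Hx. pose proof Hp as [Hw Hs].
  set (A := sumk n (fun k => w k * x k)).
  assert (HA : 0 < A) by (apply wsum_pos; assumption).
  (* [ln y <= y - 1] at [y = x k / A], averaged against [w] *)
  assert (Hlin : sumk n (fun k => w k * ln (x k / A)) <= sumk n (fun k => w k * (x k / A - 1))).
  { apply sumk_le. intros k Hk. apply Rmult_le_compat_l; [apply Hw; exact Hk|].
    apply ln_le_sub1, Rdiv_lt_0_compat; auto. }
  assert (E1 : sumk n (fun k => w k * ln (x k / A)) = sumk n (fun k => w k * ln (x k)) - ln A).
  { rewrite <- (Rmult_1_l (ln A)), <- Hs, <- sumk_mul_r, <- sumk_sub.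
    apply sumk_ext. intros k Hk. rewrite ln_div by auto. ring. }
  assert (E2 : sumk n (fun k => w k * (x k / A - 1)) = 0).
  { rewrite (sumk_ext n _ (fun k => w k * x k / A - w k)) by (intros; field; lra).
    rewrite sumk_sub, sumk_div, Hs. fold A. field. lra. }
  lra.
Qed.

Section OneRound.

Variables (n : nat) (w l : nat -> R) (e : R).
Hypotheses (w_prob : prob_weights n w) (l_unit : forall k, (k < n)%nat -> 0 <= l k <= 1)
  (e_pos : 0 < e).

Let h := sumk n (fun k => w k * l k).
Let Z := sumk n (fun k => w k * exp (- e * l k)).

Lemma wsum_exp_pos : 0 < Z.
Proof. apply wsum_pos; [exact w_prob | intros; apply exp_pos]. Qed.

Lemma ln_wsum_exp_le0 : ln Z <= 0.
Proof.
  rewrite <- ln_1. apply ln_le; [exact wsum_exp_pos|].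
  destruct w_prob as [Hw Hs]. rewrite <- Hs. apply sumk_le. intros k Hk.
  specialize (Hw k Hk). specialize (l_unit k Hk).
  assert (exp (- e * l k) <= 1) by (rewrite <- exp_0; apply exp_le; nra). nra.
Qed.

Lemma ln_wsum_exp_ge : - e * h <= ln Z.
Proof.
  eapply Rle_trans; [|apply jensen_ln; [exact w_prob | intros; apply exp_pos]].
  unfold h. rewrite <- sumk_mul_l. right. apply sumk_ext. intros. rewrite ln_exp. ring.
Qed.

(* Centering the losses at [h] turns [ln Z] into [ln (sum w exp x) - e h] with
   [sum w x = 0], and [exp_remainder_le] bounds the second-order remainder. *)
Lemma ln_wsum_exp_bernstein : (1 - e / 3) * (e * h + ln Z) <= e ^ 2 / 2 * (h * (1 - h)).
Proof.
  pose proof w_prob as [Hw Hs].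
  pose proof ln_wsum_exp_ge. pose proof (wsum_unit n w l w_prob l_unit) as Hh. fold h in Hh.
  destruct (Rle_lt_dec 3 e) as [He3|He3].
  { assert (0 <= h * (1 - h)) by nra. assert (0 <= e ^ 2 / 2) by nra. nra. }
  set (x := fun k => e * (h - l k)).
  assert (Ex : sumk n (fun k => w k * exp (x k)) = exp (e * h) * Z).
  { unfold Z. rewrite <- sumk_mul_l. apply sumk_ext. intros k Hk. unfold x.
    replace (e * (h - l k)) with (e * h + - e * l k) by ring. rewrite exp_plus. ring. }
  assert (Ecenter : sumk n (fun k => w k * x k) = 0).
  { rewrite (sumk_ext n _ (fun k => e * h * w k - e * (w k * l k))) by (intros; unfold x; ring).
    rewrite sumk_sub, !sumk_mul_l, Hs. fold h. ring. }
  assert (Hln : e * h + ln Z <= sumk n (fun k => w k * (exp (x k) - 1 - x k))).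
  { rewrite <- (ln_exp (e * h)) at 1. rewrite <- ln_mult by (apply exp_pos || apply wsum_exp_pos).
    rewrite <- Ex.
    eapply Rle_trans; [apply ln_le_sub1, wsum_pos; [exact w_prob | intros; apply exp_pos]|].
    rewrite (sumk_ext n (fun k => w k * (exp (x k) - 1 - x k))
               (fun k => w k * exp (x k) - w k - w k * x k)) by (intros; ring).
    rewrite !sumk_sub, Hs, Ecenter. lra. }
  assert (Hrem : (1 - e / 3) * sumk n (fun k => w k * (exp (x k) - 1 - x k))
                 <= sumk n (fun k => w k * (x k ^ 2 / 2))).
  { rewrite <- sumk_mul_l. apply sumk_le. intros k Hk.
    specialize (Hw k Hk). specialize (l_unit k Hk).
    pose proof (exp_remainder_le (x k)). pose proof (exp_ineq1_le (x k)).
    assert (x k <= e) by (unfold x; nra).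
    assert ((1 - e / 3) * (exp (x k) - 1 - x k) <= x k ^ 2 / 2) by nra.
    rewrite <- Rmult_assoc, (Rmult_comm _ (w k)), Rmult_assoc.
    apply Rmult_le_compat_l; assumption. }
  assert (Hsq : sumk n (fun k => w k * (x k ^ 2 / 2)) <= e ^ 2 / 2 * (h * (1 - h))).
  { apply Rle_trans with
      (sumk n (fun k => e ^ 2 / 2 * (w k * l k) - e ^ 2 * h * (w k * l k) + e ^ 2 / 2 * h ^ 2 * w k)).
    - apply sumk_le. intros k Hk. specialize (Hw k Hk). specialize (l_unit k Hk). unfold x.
      assert (w k * l k ^ 2 <= w k * l k) by (apply Rmult_le_compat_l; nra). nra.
    - rewrite sumk_add, sumk_sub, !sumk_mul_l, Hs. fold h. apply Req_le. field. }
  assert (0 <= 1 - e / 3) by lra. nra.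
Qed.

End OneRound.

Lemma minupto_le n f j : (j <= n)%nat -> minupto n f <= f j.
Proof.
  induction n as [|n IH]; simpl; intros Hj.
  - replace j with 0%nat by lia. lra.
  - destruct (Nat.eq_dec j (S n)) as [->|Hjn]; [apply Rmin_r|].
    eapply Rle_trans; [apply Rmin_l | apply IH; lia].
Qed.

Lemma minupto_attained n f : exists j, (j <= n)%nat /\ minupto n f = f j.
Proof.
  induction n as [|n [j [Hj E]]]; simpl; [exists 0%nat; split; reflexivity|].
  unfold Rmin. destruct (Rle_dec (minupto n f) (f (S n))).
  - exists j; split; [lia | exact E].
  - exists (S n); split; reflexivity.
Qed.

(* Convexity of [b |-> ln (sum_k exp (- b x_k))]: it lies above its tangent line at [a],
   whose slope is minus the mean of [x] under the Gibbs weights at [a]. *)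
Lemma ln_sumk_exp_tangent n x a b : (1 <= n)%nat ->
  let q k := exp (- a * x k) / sumk n (fun j => exp (- a * x j)) in
  ln (sumk n (fun k => exp (- a * x k))) - (b - a) * sumk n (fun k => q k * x k)
  <= ln (sumk n (fun k => exp (- b * x k))).
Proof.
  intros Hn q.
  set (Za := sumk n (fun j => exp (- a * x j))).
  assert (HZa : 0 < Za) by (apply sumk_exp_pos; exact Hn).
  assert (Hq : forall k, 0 < q k) by (intros; apply Rdiv_lt_0_compat; [apply exp_pos | exact HZa]).
  assert (Hprob : prob_weights n q).
  { split; [intros; left; apply Hq|]. unfold q. rewrite sumk_div. fold Za. field. lra. }
  pose proof (jensen_ln n q (fun k => exp (- b * x k) / q k) Hprob
                (fun k _ => Rdiv_lt_0_compat _ _ (exp_pos _) (Hq k))) as J.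
  cbv beta in J.
  rewrite (sumk_ext n (fun k => q k * (exp (- b * x k) / q k)) (fun k => exp (- b * x k))) in J
    by (intros; field; apply Rgt_not_eq, Hq).
  rewrite (sumk_ext n _ (fun k => - (b - a) * (q k * x k) + ln Za * q k)) in J.
  2:{ intros k _. assert (Hlnq : ln (q k) = - a * x k - ln Za)
        by (unfold q; rewrite ln_div, ln_exp by (apply exp_pos || exact HZa); reflexivity).
      rewrite ln_div, ln_exp, Hlnq by (apply exp_pos || apply Hq). ring. }
  rewrite sumk_add, sumk_mul_l, sumk_mul_l, (proj2 Hprob), Rmult_1_r in J. lra.
Qed.

Section AdaHedge.

Variables (K : nat) (loss : nat -> nat -> R).

Lemma Lcum_succ s k : Lcum loss (S s) k = Lcum loss s k + loss (S s) k.
Proof. reflexivity. Qed.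

Lemma Lstar_le t k : (k < K)%nat -> Lstar K loss t <= Lcum loss t k.
Proof. intros Hk. apply (minupto_le _ (fun k => Lcum loss t k)). lia. Qed.

Lemma Lstar_attained t : (1 <= K)%nat ->
  exists j, (j < K)%nat /\ Lstar K loss t = Lcum loss t j.
Proof.
  intros HK. destruct (minupto_attained (K - 1) (fun k => Lcum loss t k)) as [j [Hj E]].
  exists j; split; [lia | exact E].
Qed.

Lemma Lstar_0 : Lstar K loss 0 = 0.
Proof.
  unfold Lstar. induction (K - 1)%nat as [|n IH]; simpl; [reflexivity|].
  rewrite IH. unfold Lcum, Rmin; simpl. destruct Rle_dec; reflexivity.
Qed.

Lemma ew_weight_prob eta t : (1 <= K)%nat -> prob_weights K (ew_weight K loss eta t).
Proof.
  intros HK. destruct eta as [e|]; unfold ew_weight.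
  - set (a := fun j => exp (- e * Lcum loss (t - 1) j)).
    assert (Ha : 0 < sumk K a) by (apply sumk_exp_pos; exact HK).
    split; [intros; apply Rdiv_le_0_compat; [left; apply exp_pos | exact Ha]|].
    rewrite sumk_div. apply Rdiv_diag. lra.
  - set (ind := fun j => if Req_EM_T (Lcum loss (t - 1) j) (Lstar K loss (t - 1)) then 1 else 0).
    assert (Hind : forall j, 0 <= ind j) by (intros; unfold ind; destruct Req_EM_T; lra).
    assert (Hsum : 1 <= sumk K ind).
    { destruct (Lstar_attained (t - 1) HK) as [j [Hj E]].
      apply Rle_trans with (ind j); [|apply sumk_ge_term; auto].
      unfold ind. destruct Req_EM_T; [lra | congruence]. }
    split; [intros; apply Rdiv_le_0_compat; [apply Hind | lra]|].
    rewrite sumk_div. apply Rdiv_diag. lra.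
Qed.

(* The cumulative mix loss of the run with the fixed rate [eta]: its mix losses telescope
   to it ([mix_loss_succ]). *)
Definition cum_mix_loss (t : nat) (eta : lrate) : R :=
  match eta with
  | Some e => - (1 / e) * ln (sumk K (fun k => exp (- e * Lcum loss t k)) / INR K)
  | None => Lstar K loss t
  end.

Section OneExpertAtLeast.

Hypothesis K_pos : (1 <= K)%nat.

Let K_INR_pos : 0 < INR K.
Proof. apply lt_0_INR. lia. Qed.

Lemma cum_mix_loss_0 eta : cum_mix_loss 0 eta = 0.
Proof.
  destruct eta as [e|]; simpl; [|apply Lstar_0].
  rewrite (sumk_ext K _ (fun _ => 1)) by (intros; unfold Lcum; simpl; rewrite Rmult_0_r; apply exp_0).
  rewrite sumk_const, Rmult_1_r, Rdiv_diag, ln_1 by lra. ring.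
Qed.

Lemma mix_loss_succ eta s :
  mix_loss K loss eta (S s) = cum_mix_loss (S s) eta - cum_mix_loss s eta.
Proof.
  destruct eta as [e|]; unfold mix_loss, cum_mix_loss, ew_weight;
    replace (S s - 1)%nat with s by lia; [|reflexivity].
  set (Z0 := sumk K (fun j => exp (- e * Lcum loss s j))).
  set (Z1 := sumk K (fun j => exp (- e * Lcum loss (S s) j))).
  assert (HZ0 : 0 < Z0) by (apply sumk_exp_pos; exact K_pos).
  assert (HZ1 : 0 < Z1) by (apply sumk_exp_pos; exact K_pos).
  rewrite (sumk_ext K _ (fun k => exp (- e * Lcum loss (S s) k) / Z0)).
  2:{ intros k _. rewrite Lcum_succ, Rmult_plus_distr_l, exp_plus. fold Z0. field. lra. }
  rewrite sumk_div. fold Z1.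
  replace (Z1 / Z0) with ((Z1 / INR K) / (Z0 / INR K)) by (field; lra).
  rewrite ln_div by (apply Rdiv_lt_0_compat; assumption). ring.
Qed.

Lemma cum_mix_loss_None_le t e : 0 < e -> cum_mix_loss t None <= cum_mix_loss t (Some e).
Proof.
  intros He. simpl. set (Ls := Lstar K loss t).
  assert (Hsum : sumk K (fun k => exp (- e * Lcum loss t k)) / INR K <= exp (- e * Ls)).
  { apply Rle_div_l; [exact K_INR_pos|]. rewrite Rmult_comm, <- sumk_const.
    apply sumk_le. intros k Hk. apply exp_le.
    assert (Ls <= Lcum loss t k) by (apply Lstar_le; exact Hk). nra. }
  apply ln_le in Hsum; [|apply Rdiv_lt_0_compat; [apply sumk_exp_pos | ]; assumption].
  rewrite ln_exp in Hsum.
  apply Rmult_le_compat_neg_l with (r := - (1 / e)) in Hsum;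
    [|assert (0 < 1 / e) by (apply Rdiv_lt_0_compat; lra); lra].
  replace (- (1 / e) * (- e * Ls)) with Ls in Hsum by (field; lra). exact Hsum.
Qed.

Lemma cum_mix_loss_le_Lstar t e : 0 < e ->
  cum_mix_loss t (Some e) <= Lstar K loss t + ln (INR K) / e.
Proof.
  intros He. simpl. destruct (Lstar_attained t K_pos) as [j [Hj E]].
  assert (Hsum : exp (- e * Lstar K loss t) / INR K
                 <= sumk K (fun k => exp (- e * Lcum loss t k)) / INR K).
  { apply Rmult_le_compat_r; [left; apply Rinv_0_lt_compat, K_INR_pos|]. rewrite E.
    apply (sumk_ge_term K (fun k => exp (- e * Lcum loss t k))); [intros; left; apply exp_pos | exact Hj]. }
  apply ln_le in Hsum; [|apply Rdiv_lt_0_compat; [apply exp_pos | exact K_INR_pos]].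
  rewrite ln_div, ln_exp in Hsum by (apply exp_pos || exact K_INR_pos).
  apply Rmult_le_compat_neg_l with (r := - (1 / e)) in Hsum;
    [|assert (0 < 1 / e) by (apply Rdiv_lt_0_compat; lra); lra].
  replace (- (1 / e) * (- e * Lstar K loss t - ln (INR K))) with (Lstar K loss t + ln (INR K) / e)
    in Hsum by (field; lra). exact Hsum.
Qed.

(* [P e := ln (mean_k exp (- e L_k))] is convex with [P 0 = 0]; the tangent at [e] taken at
   [e'] and at [0] gives [e' P e <= e P e'], i.e. [- P e / e] is nonincreasing. *)
Lemma cum_mix_loss_antitone t e e' : 0 < e -> e <= e' ->
  cum_mix_loss t (Some e') <= cum_mix_loss t (Some e).
Proof.
  intros He Hee. simpl.
  pose proof (ln_sumk_exp_tangent K (Lcum loss t) e e' K_pos) as Tan'.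
  pose proof (ln_sumk_exp_tangent K (Lcum loss t) e 0 K_pos) as Tan0. simpl in Tan', Tan0.
  rewrite (sumk_ext K (fun k => exp (- 0 * Lcum loss t k)) (fun _ => 1)) in Tan0
    by (intros; rewrite Ropp_0, Rmult_0_l; apply exp_0).
  rewrite sumk_const, Rmult_1_r in Tan0.
  rewrite !ln_div by (exact K_INR_pos || apply sumk_exp_pos; exact K_pos).
  set (P := ln (sumk K (fun k => exp (- e * Lcum loss t k))) - ln (INR K)) in *.
  set (P' := ln (sumk K (fun k => exp (- e' * Lcum loss t k))) - ln (INR K)).
  set (E := sumk K (fun k => _ / _ * Lcum loss t k)) in Tan', Tan0.
  assert (Hmain : e' * P <= e * P').
  { assert (0 <= (e' - e) * (- e * E - P)) by (apply Rmult_le_pos; unfold P; lra).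
    assert (0 <= e * (P' - P + (e' - e) * E)) by (apply Rmult_le_pos; unfold P, P'; lra).
    lra. }
  apply Rmult_le_reg_l with (e * e'); [nra|].
  replace (e * e' * (- (1 / e') * P')) with (- (e * P')) by (field; lra).
  replace (e * e' * (- (1 / e) * P)) with (- (e' * P)) by (field; lra). lra.
Qed.

Lemma Lstar_succ_ge s : (forall k, (k < K)%nat -> 0 <= loss (S s) k) ->
  Lstar K loss s <= Lstar K loss (S s).
Proof.
  intros Hl. destruct (Lstar_attained (S s) K_pos) as [j [Hj ->]].
  rewrite Lcum_succ. pose proof (Lstar_le s j Hj). pose proof (Hl j Hj). lra.
Qed.

Lemma mix_gap_None_unit s : (forall k, (k < K)%nat -> 0 <= loss (S s) k <= 1) ->
  0 <= mix_gap K loss None (S s) <= 1.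
Proof.
  intros Hl. pose proof (ew_weight_prob None (S s) K_pos) as Hp.
  pose proof (wsum_unit K _ _ Hp Hl) as Hh.
  assert (Hmono : Lstar K loss s <= Lstar K loss (S s))
    by (apply Lstar_succ_ge; intros k Hk; apply Hl, Hk).
  unfold mix_gap, mix_loss, hedge_loss in *. replace (S s - 1)%nat with s by lia.
  split; [|lra].
  (* all the weight sits on current leaders, whose loss this round is at least the increment of L* *)
  destruct Hp as [Hw Hs].
  enough (sumk K (fun k => ew_weight K loss None (S s) k * (Lstar K loss (S s) - Lstar K loss s))
          <= sumk K (fun k => ew_weight K loss None (S s) k * loss (S s) k))
    by (rewrite sumk_mul_r, Hs in *; lra).
  apply sumk_le. intros k Hk. specialize (Hw k Hk). unfold ew_weight in *.
  replace (S s - 1)%nat with s in * by lia.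
  destruct Req_EM_T as [E|E].
  - apply Rmult_le_compat_l; [exact Hw|].
    pose proof (Lstar_le (S s) k Hk). rewrite Lcum_succ, E in *. lra.
  - unfold Rdiv. rewrite !Rmult_0_l. lra.
Qed.

Lemma mix_gap_Some_bounds e t : 0 < e ->
  (forall k, (k < K)%nat -> 0 <= loss t k <= 1) ->
  let h := hedge_loss K loss (Some e) t in
  let d := mix_gap K loss (Some e) t in
  0 <= d <= 1 /\ (1 - e / 3) * d <= e / 2 * (h * (1 - h)).
Proof.
  intros He Hl h d.
  pose proof (ew_weight_prob (Some e) t K_pos) as Hp.
  pose proof (wsum_unit K _ _ Hp Hl) as Hh.
  pose proof (ln_wsum_exp_le0 K _ (loss t) e Hp Hl He) as Hle0.
  pose proof (ln_wsum_exp_ge K _ (loss t) e Hp) as Hge.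
  pose proof (ln_wsum_exp_bernstein K _ (loss t) e Hp Hl He) as Hb.
  assert (Hd : e * d = e * h + ln (sumk K (fun k => ew_weight K loss (Some e) t k * exp (- e * loss t k))))
    by (unfold d, h, mix_gap, mix_loss, hedge_loss; field; lra).
  change (sumk K (fun k => ew_weight K loss (Some e) t k * loss t k)) with h in Hh, Hge, Hb.
  rewrite <- Hd in Hb.
  split.
  - assert (0 <= e * d <= e * 1) by nra. split; nra.
  - apply Rmult_le_reg_l with e; [exact He|]. nra.
Qed.

End OneExpertAtLeast.

Lemma ah_eta_succ s : ah_eta K loss (S s) = ah_rate K (ah_Delta K loss s).
Proof. unfold ah_eta. replace (S s - 1)%nat with s by lia. reflexivity. Qed.

Lemma ah_Delta_eq_sum t : ah_Delta K loss t = sumt t (fun s => mix_gap K loss (ah_eta K loss s) s).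
Proof. induction t as [|t IH]; simpl; [reflexivity|]. rewrite ah_eta_succ, <- IH. reflexivity. Qed.

Lemma ah_H_eq T : ah_H K loss T =
  sumt T (fun s => mix_loss K loss (ah_eta K loss s) s) + ah_Delta K loss T.
Proof.
  rewrite ah_Delta_eq_sum, <- sumt_add. apply sumt_ext. intros. unfold mix_gap. ring.
Qed.

Section TwoExpertsAtLeast.

Hypothesis K_ge2 : (2 <= K)%nat.

Let K_pos : (1 <= K)%nat.
Proof. lia. Qed.

Lemma ln_K_pos : 0 < ln (INR K).
Proof.
  rewrite <- ln_1. apply ln_increasing; [lra|].
  apply le_INR in K_ge2. simpl in K_ge2. lra.
Qed.

Lemma cum_mix_loss_ah_rate_mono t D D' : 0 <= D -> D <= D' ->
  cum_mix_loss t (ah_rate K D) <= cum_mix_loss t (ah_rate K D').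
Proof.
  intros HD HDD. pose proof ln_K_pos.
  unfold ah_rate. destruct (Req_EM_T D 0), (Req_EM_T D' 0); try lra.
  - apply cum_mix_loss_None_le; [exact K_pos|]. apply Rdiv_lt_0_compat; lra.
  - apply cum_mix_loss_antitone; [exact K_pos | apply Rdiv_lt_0_compat; lra |].
    apply Rmult_le_compat_l; [lra|]. apply Rinv_le_contravar; lra.
Qed.

Lemma cum_mix_loss_ah_rate_le t D : 0 <= D -> cum_mix_loss t (ah_rate K D) <= Lstar K loss t + D.
Proof.
  intros HD. pose proof ln_K_pos.
  unfold ah_rate. destruct (Req_EM_T D 0); simpl cum_mix_loss at 1; [lra|].
  eapply Rle_trans; [apply cum_mix_loss_le_Lstar; [exact K_pos | apply Rdiv_lt_0_compat; lra]|].
  right. field. split; lra.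
Qed.

(* With [eta = ln K / D], the Bernstein bound [(1 - eta/3) d <= eta/2 h (1 - h)] multiplied
   by [2 D] reads [2 D d <= ln K h (1 - h) + 2/3 ln K d]. *)
Lemma ah_mix_gap_bounds s D : 0 <= D ->
  (forall k, (k < K)%nat -> 0 <= loss (S s) k <= 1) ->
  let h := hedge_loss K loss (ah_rate K D) (S s) in
  let d := mix_gap K loss (ah_rate K D) (S s) in
  0 <= d <= 1 /\
  2 * D * d + d ^ 2 <= ln (INR K) * (h * (1 - h)) + (2 * ln (INR K) / 3 + 1) * d.
Proof.
  intros HD Hl h d. pose proof ln_K_pos as Hc.
  assert (Hvar : forall x, 0 <= x <= 1 -> 0 <= ln (INR K) * (x * (1 - x)))
    by (intros x Hx; apply Rmult_le_pos; nra).
  unfold h, d, ah_rate in *. destruct (Req_EM_T D 0) as [->|HD0].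
  - pose proof (mix_gap_None_unit K_pos s Hl).
    pose proof (wsum_unit K _ _ (ew_weight_prob None (S s) K_pos) Hl) as Hh.
    split; [assumption|]. specialize (Hvar _ Hh). unfold hedge_loss in *. nra.
  - set (e := ln (INR K) / D).
    assert (He : 0 < e) by (apply Rdiv_lt_0_compat; lra).
    destruct (mix_gap_Some_bounds K_pos e (S s) He Hl) as [Hd Hb]. cbv zeta in Hb.
    split; [exact Hd|].
    apply Rmult_le_compat_l with (r := 2 * D) in Hb; [|lra].
    replace (2 * D * ((1 - e / 3) * mix_gap K loss (Some e) (S s)))
      with (2 * D * mix_gap K loss (Some e) (S s) - 2 * ln (INR K) / 3 * mix_gap K loss (Some e) (S s))
      in Hb by (unfold e; field; lra).
    replace (2 * D * (e / 2 * (hedge_loss K loss (Some e) (S s) * (1 - hedge_loss K loss (Some e) (S s)))))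
      with (ln (INR K) * (hedge_loss K loss (Some e) (S s) * (1 - hedge_loss K loss (Some e) (S s))))
      in Hb by (unfold e; field; lra).
    nra.
Qed.

Section BoundedLosses.

Variable T : nat.
Hypothesis loss_unit : forall t k, (1 <= t <= T)%nat -> (k < K)%nat -> 0 <= loss t k <= 1.

Let loss_unit_succ s : (S s <= T)%nat -> forall k, (k < K)%nat -> 0 <= loss (S s) k <= 1.
Proof. intros Hs k Hk. apply loss_unit; [lia | exact Hk]. Qed.

Lemma ah_Delta_nonneg s : (s <= T)%nat -> 0 <= ah_Delta K loss s.
Proof.
  induction s as [|s IH]; intros Hs; simpl; [lra|].
  assert (HD : 0 <= ah_Delta K loss s) by (apply IH; lia).
  destruct (ah_mix_gap_bounds s _ HD (loss_unit_succ s Hs)) as [Hd _]. lra.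
Qed.

Lemma ah_Delta_le_succ s : (S s <= T)%nat -> ah_Delta K loss s <= ah_Delta K loss (S s).
Proof.
  intros Hs. simpl.
  assert (HD : 0 <= ah_Delta K loss s) by (apply ah_Delta_nonneg; lia).
  destruct (ah_mix_gap_bounds s _ HD (loss_unit_succ s Hs)) as [Hd _]. lra.
Qed.

Lemma ah_Delta_pred_le t : (t <= T)%nat -> ah_Delta K loss (t - 1) <= ah_Delta K loss t.
Proof.
  intros Ht. destruct t as [|t]; [apply Rle_refl|].
  replace (S t - 1)%nat with t by lia. apply ah_Delta_le_succ, Ht.
Qed.

Lemma ah_Delta_sq_le t : (t <= T)%nat ->
  ah_Delta K loss t ^ 2 <=
    ln (INR K) * sumt t (fun s => hedge_loss K loss (ah_eta K loss s) s *
                                  (1 - hedge_loss K loss (ah_eta K loss s) s))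
    + (2 * ln (INR K) / 3 + 1) * ah_Delta K loss t.
Proof.
  induction t as [|t IH]; intros Ht; simpl; [lra|].
  assert (HD : 0 <= ah_Delta K loss t) by (apply ah_Delta_nonneg; lia).
  destruct (ah_mix_gap_bounds t _ HD (loss_unit_succ t Ht)) as [_ Hstep].
  rewrite ah_eta_succ. specialize (IH ltac:(lia)). nra.
Qed.

Lemma sum_mix_loss_le t : (t <= T)%nat ->
  sumt t (fun s => mix_loss K loss (ah_eta K loss s) s) <= cum_mix_loss t (ah_eta K loss t).
Proof.
  induction t as [|t IH]; intros Ht; simpl sumt.
  - rewrite cum_mix_loss_0 by exact K_pos. lra.
  - rewrite mix_loss_succ by exact K_pos.
    (* AdaHedge's learning rate only decreases, and the potential grows as it does *)
    assert (cum_mix_loss t (ah_eta K loss t) <= cum_mix_loss t (ah_eta K loss (S t))).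
    { rewrite ah_eta_succ. destruct t as [|t]; [rewrite !cum_mix_loss_0 by exact K_pos; lra|].
      rewrite ah_eta_succ. apply cum_mix_loss_ah_rate_mono.
      - apply ah_Delta_nonneg; lia.
      - apply ah_Delta_le_succ; lia. }
    specialize (IH ltac:(lia)). lra.
Qed.

Lemma ah_regret_le_2Delta : ah_regret K loss T <= 2 * ah_Delta K loss T.
Proof.
  unfold ah_regret. rewrite ah_H_eq.
  pose proof (sum_mix_loss_le T (le_n T)) as HM.
  pose proof (ah_Delta_pred_le T (le_n T)) as Hprev.
  pose proof (cum_mix_loss_ah_rate_le T _ (ah_Delta_nonneg (T - 1) ltac:(lia))) as HPhi.
  change (ah_eta K loss T) with (ah_rate K (ah_Delta K loss (T - 1))) in HM. lra.
Qed.

End BoundedLosses.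

End TwoExpertsAtLeast.

End AdaHedge.

Lemma Lstar_bounds K loss T : (1 <= K)%nat ->
  (forall t k, (1 <= t <= T)%nat -> (k < K)%nat -> 0 <= loss t k <= 1) ->
  0 <= Lstar K loss T <= INR T.
Proof.
  intros HK Hl. destruct (Lstar_attained K loss T HK) as [j [Hj ->]].
  assert (Hcum : forall t, (t <= T)%nat -> 0 <= Lcum loss t j <= INR t).
  { induction t as [|t IH]; intros Ht; [unfold Lcum; simpl; lra|].
    rewrite Lcum_succ, S_INR. specialize (IH ltac:(lia)).
    specialize (Hl (S t) j ltac:(lia) Hj). lra. }
  apply Hcum, le_n.
Qed.

Lemma ah_regret_single_expert loss T : ah_regret 1 loss T = 0.
Proof.
  assert (Hround : forall s, hedge_loss 1 loss None (S s) = loss (S s) 0%nat /\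
                             mix_loss 1 loss None (S s) = loss (S s) 0%nat).
  { intros s. unfold hedge_loss, mix_loss, ew_weight, Lstar. simpl.
    replace (s - 0)%nat with s by lia. split.
    - destruct Req_EM_T as [_|E]; [field | congruence].
    - rewrite Lcum_succ. ring. }
  assert (HDelta : forall t, ah_Delta 1 loss t = 0).
  { induction t as [|t IH]; simpl; [reflexivity|]. rewrite IH. unfold ah_rate, mix_gap.
    destruct Req_EM_T as [_|E]; [|lra]. destruct (Hround t) as [-> ->]. ring. }
  unfold ah_regret, ah_H, Lstar. simpl.
  rewrite (sumt_ext T _ (fun s => loss s 0%nat)); [unfold Lcum; ring|].
  intros s Hs. destruct s as [|s]; [lia|].
  rewrite ah_eta_succ, HDelta. unfold ah_rate.
  destruct Req_EM_T as [_|E]; [apply Hround | lra].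
Qed.

Lemma sumt_mul_one_sub_le T f : (1 <= T)%nat ->
  sumt T (fun s => f s * (1 - f s)) <= sumt T f * (INR T - sumt T f) / INR T.
Proof.
  intros HT. assert (HTpos : 0 < INR T) by (apply lt_0_INR; lia).
  set (H := sumt T f). set (a := H / INR T).
  assert (Hsq : 0 <= sumt T (fun s => (f s - a) ^ 2)).
  { apply Rle_trans with (sumt T (fun _ => 0)); [rewrite sumt_const; lra|].
    apply sumt_le. intros. apply pow2_ge_0. }
  rewrite (sumt_ext T _ (fun s => (f s * f s - 2 * a * f s) + a ^ 2)) in Hsq by (intros; ring).
  rewrite sumt_add, sumt_sub, sumt_mul_l, sumt_const in Hsq. fold H in Hsq.
  rewrite (sumt_ext T _ (fun s => f s - f s * f s)) by (intros; ring).
  rewrite sumt_sub. fold H.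
  assert (H * (INR T - H) / INR T = H - 2 * a * H + INR T * a ^ 2) by (unfold a; field; lra).
  lra.
Qed.

Lemma mul_one_sub_div_add_le L R T : 0 <= L -> 0 <= R -> 0 < T ->
  (L + R) * (T - (L + R)) / T <= L * (T - L) / T + R.
Proof.
  intros HL HR HT. apply Rmult_le_reg_l with T; [exact HT|].
  replace (T * ((L + R) * (T - (L + R)) / T)) with ((L + R) * (T - (L + R))) by (field; lra).
  replace (T * (L * (T - L) / T + R)) with (L * (T - L) + T * R) by (field; lra).
  nra.
Qed.

Lemma le_sqrt_add_of_sq_le x a b : 0 <= x -> 0 <= a -> 0 <= b ->
  x ^ 2 <= a + b * x -> x <= sqrt a + b.
Proof.
  intros Hx Ha Hb Hq. pose proof (sqrt_pos a). pose proof (sqrt_sqrt a Ha).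
  destruct (Rle_lt_dec x (sqrt a + b)) as [Hle|Hlt]; [exact Hle|].
  assert (x * x > x * (sqrt a + b)) by (apply Rmult_lt_compat_l; lra).
  assert (x * sqrt a >= sqrt a * sqrt a) by nra. nra.
Qed.

Theorem theorem8 (K T : nat) (loss : nat -> nat -> R) :
  (1 <= K)%nat -> (1 <= T)%nat ->
  (forall t k, (1 <= t <= T)%nat -> (k < K)%nat -> 0 <= loss t k <= 1) ->
  ah_regret K loss T <=
    2 * sqrt (Lstar K loss T * (INR T - Lstar K loss T) / INR T * ln (INR K))
    + 16 / 3 * ln (INR K) + 2.
Proof.
  intros HK HT Hl.
  set (B := Lstar K loss T * (INR T - Lstar K loss T) / INR T).
  pose proof (sqrt_pos (B * ln (INR K))).
  destruct (Nat.eq_dec K 1) as [->|HK1].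
  { rewrite ah_regret_single_expert. simpl INR in *. rewrite ln_1 in *. lra. }
  assert (HK2 : (2 <= K)%nat) by lia.
  pose proof (ln_K_pos K HK2) as Hc.
  pose proof (ah_regret_le_2Delta K loss HK2 T Hl) as HRD.
  pose proof (ah_Delta_sq_le K loss HK2 T Hl T (le_n T)) as HD2.
  pose proof (sumt_mul_one_sub_le T (fun s => hedge_loss K loss (ah_eta K loss s) s) HT) as HV.
  pose proof (Lstar_bounds K loss T HK Hl) as HL.
  assert (HTpos : 0 < INR T) by (apply lt_0_INR; lia).
  destruct (Rle_lt_dec (ah_regret K loss T) 0) as [HR|HR]; [lra|].
  pose proof (mul_one_sub_div_add_le (Lstar K loss T) (ah_regret K loss T) (INR T)
                (proj1 HL) (Rlt_le _ _ HR) HTpos) as Hshift.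
  replace (Lstar K loss T + ah_regret K loss T) with (ah_H K loss T) in Hshift
    by (unfold ah_regret; ring).
  cbv beta in HV. fold (ah_H K loss T) in HV. fold B in Hshift.
  assert (HB : 0 <= B) by (apply Rdiv_le_0_compat; [nra | exact HTpos]).
  assert (Hquad : ah_Delta K loss T ^ 2 <=
                  B * ln (INR K) + (8 / 3 * ln (INR K) + 1) * ah_Delta K loss T).
  { assert (ln (INR K) * sumt T (fun s => hedge_loss K loss (ah_eta K loss s) s *
                                          (1 - hedge_loss K loss (ah_eta K loss s) s))
            <= ln (INR K) * (B + ah_regret K loss T)) by (apply Rmult_le_compat_l; lra).
    nra. }
  apply le_sqrt_add_of_sq_le in Hquad; [lra | lra | nra | lra].
Qed.
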